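(* Let $X$ be a real Hilbert space, let $A,B\colon X\rightrightarrows X$ be set-valued operators, let $C\colon X\to X$ be a single-valued operator, let $\eta,\gamma,\delta>0$, and set $\lambda:=1+\frac{\delta}{\gamma}$. Define the (possibly set-valued) operator $$T_{A,B,C}:=\mathrm{Id}-\eta J_{\gamma A}+\eta J_{\delta B}\big((1-\lambda)\mathrm{Id}+\lambda J_{\gamma A}-\delta C J_{\gamma A}\big),$$ i.e. $T_{A,B,C}x=\{x-\eta a+\eta b:\ a\in J_{\gamma A}x,\ b\in J_{\delta B}((1-\lambda)x+\lambda a-\delta Ca)\}$. Then $\operatorname{Fix}T_{A,B,C}\neq\varnothing$ if and only if $\operatorname{zer}(A+B+C)\neq\varnothing$. Moreover, if $J_{\gamma A}$ is single-valued, then $J_{\gamma A}(\operatorname{Fix}T_{A,B,C})=\operatorname{zer}(A+B+C)$.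
   Context: For a set-valued operator $A\colon X\rightrightarrows X$: the resolvent is $J_A:=(\mathrm{Id}+A)^{-1}$ (inverse in the sense of graphs); $\operatorname{zer}A:=\{x: 0\in Ax\}$; for a (possibly set-valued) operator $T$, $\operatorname{Fix}T:=\{x: x\in Tx\}$. *)

From HB Require Import structures.
From mathcomp Require Import all_boot all_order all_algebra.
From mathcomp Require Import all_classical all_reals all_analysis.
Set Implicit Arguments. Unset Strict Implicit. Unset Printing Implicit Defensive.
Import Order.TTheory GRing.Theory Num.Theory.
Import numFieldNormedType.Exports.
Local Open Scope classical_set_scope.
Local Open Scope ring_scope.

(* A real Hilbert space: a complete normed space over R whose norm is induced
   by an inner product ip (symmetric, linear in the first argument,
   ip x x = ||x||^2). *)
Definition hilbert_inner (R : realType) (X : completeNormedModType R)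
  (ip : X -> X -> R) : Prop :=
  (forall x y, ip x y = ip y x) /\
  (forall (a : R) x y z, ip (a *: x + y) z = a * ip x z + ip y z) /\
  (forall x, ip x x = `|x| ^+ 2).

Section SetValued.
Context (R : realType) (X : completeNormedModType R).

Definition scale_op (g : R) (A : X -> set X) : X -> set X :=
  fun x => [set g *: u | u in A x].

(* resolvent J_A := (Id + A)^{-1} (inverse of graphs):
   p \in J_A x  <->  x \in (Id + A) p  <->  exists u \in A p, x = p + u *)
Definition resolvent (A : X -> set X) : X -> set X :=
  fun x => [set p | exists2 u, A p u & x = p + u].

Definition sum3_op (A B : X -> set X) (C : X -> X) : X -> set X :=
  fun x => [set y | exists a b, [/\ A x a, B x b & y = a + b + C x]].

Definition zer (A : X -> set X) : set X := [set x | A x 0].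

Definition Fix (T : X -> set X) : set X := [set x | T x x].

Definition op_image (T : X -> set X) (S : set X) : set X :=
  [set y | exists2 x, S x & T x y].

Definition single_valued (T : X -> set X) : Prop :=
  forall x, exists! y, T x y.

Definition T_ABC (A B : X -> set X) (C : X -> X) (eta gamma delta : R)
  : X -> set X :=
  let lambda := 1 + delta / gamma in
  fun x => [set y | exists a b,
    [/\ resolvent (scale_op gamma A) x a,
        resolvent (scale_op delta B)
          ((1 - lambda) *: x + lambda *: a - delta *: C a) b
      & y = x - eta *: a + eta *: b]].

End SetValued.

From HB Require Import structures.
From mathcomp Require Import all_boot all_order all_algebra.
From mathcomp Require Import all_classical all_reals all_analysis.
Import Order.TTheory GRing.Theory Num.Theory.
Import numFieldNormedType.Exports.
Local Open Scope classical_set_scope.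
Local Open Scope ring_scope.

(* A point a lies in J_{gamma A} x
   exactly when x = a + gamma u for some u in A a.  For such x the argument of
   J_{delta B} in T_{A,B,C} x simplifies to a - delta (u + C a), because
   (1 - lambda) gamma = - delta; so a point b = a lies in J_{delta B} of it
   exactly when a - delta (u + C a) = a + delta v with v in B a, i.e. when
   u + v + C a = 0.  Moreover x - eta a + eta b = x forces b = a.  Hence:
   - every fixed point x of T has a resolvent point a in J_{gamma A} x which
     is a zero of A + B + C (lemma fix_resolvent_zer);
   - every zero z with 0 = u + v + C z yields the fixed point x = z + gamma u,
     with z in J_{gamma A} x (lemma zer_resolvent_fix).
   Both claims of the theorem follow; for the second one, single-valuedness of
   J_{gamma A} identifies any resolvent point of a fixed point with the zero
   produced by fix_resolvent_zer. *)

Lemma update_fixedE {R : fieldType} {X : lmodType R} {eta : R} (x a b : X) :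
  eta != 0 -> (x - eta *: a + eta *: b = x) <-> b = a.
Proof.
move=> eta_neq0; split=> [|->]; last by rewrite subrK.
rewrite -{2}(addr0 x) -addrA => /addrI /eqP.
rewrite addrC -scalerBr scaler_eq0 (negPf eta_neq0) subr_eq0 => /eqP //.
Qed.

(* With lambda = 1 + d/g, the reflected point (1 - lambda)(a + g u) + lambda a
   - d c collapses to a - d (u + c), since (1 - lambda) g = - d. *)
Lemma reflected_pointE {R : fieldType} {X : lmodType R} (g d : R) (a u c : X) :
  g != 0 ->
  (1 - (1 + d / g)) *: (a + g *: u) + (1 + d / g) *: a - d *: c
  = a - d *: (u + c).
Proof.
move=> g_neq0.
have coefE : (1 - (1 + d / g)) * g = - d.
  by rewrite opprD addrA subrr add0r mulNr -mulrA mulVf ?mulr1.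
rewrite scalerDr scalerA coefE scaleNr (addrAC _ (- (d *: u))) -scalerDl.
by rewrite subrK scale1r scalerDr opprD addrA.
Qed.

Lemma reflected_point_zerE {R : fieldType} {X : lmodType R} {d : R}
    (a u v c : X) :
  d != 0 -> a - d *: (u + c) = a + d *: v <-> u + v + c = 0.
Proof.
move=> d_neq0; split=> [/addrI|uvc0].
  rewrite -scalerN => /eqP; rewrite -subr_eq0 -scalerBr scaler_eq0.
  rewrite (negPf d_neq0) /= -opprD oppr_eq0 => /eqP.
  by rewrite addrAC.
congr (_ + _); rewrite -scalerN; congr (_ *: _).
by apply/eqP; rewrite eq_sym -addr_eq0 addrC addrAC uvc0.
Qed.

Section FixedPointsAndZeros.
Context (R : realType) (X : completeNormedModType R)
  (A B : X -> set X) (C : X -> X) (eta gamma delta : R)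
  (heta : 0 < eta) (hgamma : 0 < gamma) (hdelta : 0 < delta).

Lemma resolvent_scaleP (g : R) (M : X -> set X) (x p : X) :
  resolvent (scale_op g M) x p <-> exists2 u, M p u & x = p + g *: u.
Proof.
split=> [[_ [u Mu <-] ->]|[u Mu ->]]; first by exists u.
by exists (g *: u) => //; exists u.
Qed.

Lemma fix_resolvent_zer (x : X) :
  Fix (T_ABC A B C eta gamma delta) x ->
  exists2 a, resolvent (scale_op gamma A) x a & zer (sum3_op A B C) a.
Proof.
move=> [a [b [Ja Jb xE]]].
have ba : b = a by apply/(update_fixedE x a b (lt0r_neq0 heta)); exact/esym.
rewrite {}ba in Jb.
exists a => //.
have [u Au xaE] := (resolvent_scaleP _ _ _ _).1 Ja.
have [v Bv] := (resolvent_scaleP _ _ _ _).1 Jb.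
rewrite xaE reflected_pointE ?lt0r_neq0 // => reflE.
exists u, v; split => //; apply/esym.
exact: (reflected_point_zerE _ _ _ _ (lt0r_neq0 hdelta)).1 reflE.
Qed.

Lemma zer_resolvent_fix (z : X) :
  zer (sum3_op A B C) z ->
  exists2 x, Fix (T_ABC A B C eta gamma delta) x
           & resolvent (scale_op gamma A) x z.
Proof.
move=> [u [v [Au Bv uvc0]]].
have Jz : resolvent (scale_op gamma A) (z + gamma *: u) z.
  by apply/resolvent_scaleP; exists u.
exists (z + gamma *: u) => //; exists z, z; split => //; last by rewrite subrK.
apply/resolvent_scaleP; exists v => //.
rewrite reflected_pointE ?lt0r_neq0 //.
exact: (reflected_point_zerE _ _ _ _ (lt0r_neq0 hdelta)).2 (esym uvc0).
Qed.

End FixedPointsAndZeros.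

Theorem proposition2p1 (R : realType) (X : completeNormedModType R)
  (ip : X -> X -> R) (hX : hilbert_inner ip)
  (A B : X -> set X) (C : X -> X) (eta gamma delta : R)
  (heta : 0 < eta) (hgamma : 0 < gamma) (hdelta : 0 < delta) :
  (Fix (T_ABC A B C eta gamma delta) !=set0 <-> zer (sum3_op A B C) !=set0) /\
  (single_valued (resolvent (scale_op gamma A)) ->
     op_image (resolvent (scale_op gamma A)) (Fix (T_ABC A B C eta gamma delta))
     = zer (sum3_op A B C)).
Proof.
have fixP := @fix_resolvent_zer R X A B C eta gamma delta heta hgamma hdelta.
have zerP := @zer_resolvent_fix R X A B C eta gamma delta hgamma hdelta.
split.
  split=> -[x hx]; first by have [a _ ha] := fixP _ hx; exists a.
  by have [y hy _] := zerP _ hx; exists y.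
move=> J_single; apply/seteqP; split=> [y [x hx Jy]|z hz].
  have [a Ja ha] := fixP _ hx.
  have [t [_ Jt]] := J_single x.
  by rewrite -(Jt _ Jy) (Jt _ Ja).
by have [x hx Jz] := zerP _ hz; exists x.
Qed.
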